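(* Let $\mathsf G=(\mathsf V,\mathsf E)$ be a finite connected graph without loops or multiple edges, with discrete Laplacian $\mathcal L=\mathcal I\mathcal I^T$. Then the semigroup $(e^{-t\mathcal L^2})_{t\ge0}$ is eventually irreducible: there exists $t_0>0$ such that for all $t\ge t_0$ and all $f\in\mathbb R^V$ with $f\ge0$, $f\ne0$, every entry of $e^{-t\mathcal L^2}f$ is strictly positive.
   Context: $V=|\mathsf V|$. After fixing an arbitrary orientation of the edges, the incidence matrix $\mathcal I\in\mathbb R^{V\times E}$ has entries $\iota_{\mathsf v\mathsf e}=-1$ if $\mathsf v$ is the initial endpoint of $\mathsf e$, $+1$ if $\mathsf v$ is the terminal endpoint of $\mathsf e$, and $0$ otherwise; $\mathcal L=\mathcal I\mathcal I^T$. *)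

From HB Require Import structures.
From mathcomp Require Import all_boot all_order all_algebra.
From mathcomp Require Import all_classical all_reals all_analysis.
Set Implicit Arguments. Unset Strict Implicit. Unset Printing Implicit Defensive.
Import Order.TTheory GRing.Theory Num.Theory.
Local Open Scope ring_scope.

(* Vertices are 'I_n, edges are 'I_m; edge e is oriented from src e to tgt e. *)

Definition incidence (R : nzRingType) (n m : nat) (src tgt : 'I_m -> 'I_n)
  : 'M[R]_(n, m) :=
  \matrix_(v, e) (if v == src e then -1 else if v == tgt e then 1 else 0).

Definition laplacian (R : nzRingType) (n m : nat) (src tgt : 'I_m -> 'I_n)
  : 'M[R]_n :=
  incidence R src tgt *m (incidence R src tgt)^T.

Definition adjacent (n m : nat) (src tgt : 'I_m -> 'I_n) : rel 'I_n :=
  fun x y => [exists e, ((src e == x) && (tgt e == y)) || ((src e == y) && (tgt e == x))].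

Definition simple_graph (n m : nat) (src tgt : 'I_m -> 'I_n) : Prop :=
  (forall e, src e != tgt e) /\
  (forall e e', [set src e; tgt e] = [set src e'; tgt e'] -> e = e').

Definition connected_graph (n m : nat) (src tgt : 'I_m -> 'I_n) : Prop :=
  forall x y, connect (adjacent src tgt) x y.

Definition mxexp (R : realType) (n : nat) (A : 'M[R]_n) : 'M[R]_n :=
  lim ((fun N : nat => \sum_(k < N) ((k`!)%:R)^-1 *: A ^+ k) @ \oo)%classic.

(* Since L is symmetric, L^2 has a spectral decomposition with eigenvalues
   lam_l >= 0, and exp(-t L^2) = sum_l exp(-t lam_l) W_l tends, as t -> oo, to
   the spectral projector K of L^2 at 0.  K is a polynomial in L^2, so its rows
   and columns lie in ker L^2 = ker I^T, which by connectedness consists of the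
   constant vectors; as K fixes the all-ones vector, K = J / |V| has positive
   entries.  Hence exp(-t L^2) is eventually entrywise positive, and so is
   exp(-t L^2) f for every nonnegative f <> 0. *)

From Pilot Require Import Defs.
From HB Require Import structures.
From mathcomp Require Import all_boot all_order all_algebra.
From mathcomp Require Import all_classical all_reals all_analysis.
From mathcomp Require Import complex.
Import Order.TTheory GRing.Theory Num.Theory.
Import numFieldNormedType.Exports.
Set Implicit Arguments. Unset Strict Implicit. Unset Printing Implicit Defensive.
Local Open Scope classical_set_scope.
Local Open Scope ring_scope.

(* Only the powers of A are decomposed: the W l obtained for a real symmetric A
   are real parts of complex rank-one projectors, which need not be projectors. *)
Definition spectral_decomp (R : comNzRingType) (n : nat) (A : 'M[R]_n)
    (lam : 'I_n -> R) (W : 'I_n -> 'M[R]_n) : Prop :=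
  forall k, A ^+ k = \sum_l lam l ^+ k *: W l.

Section SpectralDecomposition.

Variables (R : comNzRingType) (n : nat) (A : 'M[R]_n).
Variables (lam : 'I_n -> R) (W : 'I_n -> 'M[R]_n).
Hypothesis decA : spectral_decomp A lam W.

Lemma spectral_decompZ a : spectral_decomp (a *: A) (fun l => a * lam l) W.
Proof.
have exprZ k : (a *: A) ^+ k = a ^+ k *: A ^+ k.
  elim: k => [|k IHk]; first by rewrite !expr0 scale1r.
  by rewrite !exprS IHk -!mulmxE -scalemxAl -scalemxAr scalerA.
move=> k; rewrite exprZ decA scaler_sumr.
by apply: eq_bigr => l _; rewrite scalerA exprMn.
Qed.

Lemma spectral_decompX j : spectral_decomp (A ^+ j) (fun l => lam l ^+ j) W.
Proof. by move=> k; rewrite -exprM decA; apply: eq_bigr => l _; rewrite exprM. Qed.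

End SpectralDecomposition.

Section HornerSpectral.

Variables (R : comNzRingType) (n : nat) (A : 'M[R]_n.+1).

Lemma horner_mx_spectral lam W p : spectral_decomp A lam W ->
  horner_mx A p = \sum_l p.[lam l] *: W l.
Proof.
move=> decA; rewrite -[in LHS](coefK p) poly_def linear_sum /=.
under eq_bigr do rewrite linearZ rmorphXn /= horner_mx_X decA scaler_sumr.
rewrite exchange_big; apply: eq_bigr => l _ /=.
by rewrite horner_coef scaler_suml; apply: eq_bigr => i _; rewrite scalerA.
Qed.

Lemma horner_mx_kernel p (v : 'cV[R]_n.+1) : A *m v = 0 ->
  horner_mx A p *m v = p.[0] *: v.
Proof.
move=> Av; elim/poly_ind: p => [|p c _]; first by rewrite rmorph0 horner0 mul0mx scale0r.
rewrite rmorphD rmorphM /= horner_mx_X horner_mx_C -mulmxE mulmxDl -mulmxA Av mulmx0.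
by rewrite add0r mul_scalar_mx !hornerE.
Qed.

End HornerSpectral.

Lemma sym_spectral_decomp (R : rcfType) (n : nat) (A : 'M[R]_n) : A^T = A ->
  exists lam W, spectral_decomp A lam W.
Proof.
move=> symA.
pose Ac := map_mx (real_complex R) A.
have hermA : Ac \is hermsymmx.
  apply/is_hermitianmxP; rewrite expr0 scale1r; apply/matrixP => i j.
  rewrite !mxE conj_Creal; last by apply/complex_realP; eexists.
  by rewrite -[in LHS]symA mxE.
have /orthomx_spectralP Ac_eq := hermitian_normalmx hermA.
have d_real := hermitian_spectral_diag_real hermA.
set P := spectralmx Ac in Ac_eq; set d := spectral_diag Ac in Ac_eq d_real.
have P_unit : P \in unitmx by exact: spectral_unit.
have AcX k : Ac ^+ k = invmx P *m diag_mx (\row_j (d 0 j ^+ k)) *m P.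
  elim: k => [|k IHk].
    have -> : \row_j (d 0 j ^+ 0) = const_mx 1 by apply/rowP => j; rewrite !mxE.
    by rewrite expr0 diag_const_mx mulmx1 mulVmx.
  rewrite exprSr IHk [X in _ * X]Ac_eq -mulmxE -!mulmxA; congr (_ *m _).
  rewrite !mulmxA mulmxK // mulmx_diag; congr (diag_mx _ *m _).
  by apply/rowP => j; rewrite !mxE exprSr.
have ReD (x y : R[i]) : complex.Re (x + y) = complex.Re x + complex.Re y.
  by case: x; case: y.
have ReMr (x : R[i]) (r : R) : complex.Re (x * (r%:C)%C) = complex.Re x * r.
  by case: x => a b /=; rewrite mulr0 subr0.
exists (fun l => complex.Re (d 0 l)).
exists (fun l => \matrix_(i, j) complex.Re (invmx P i l * P l j)).
move=> k; apply/matrixP => i j.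
have /matrixP/(_ i j) : map_mx (real_complex R) (A ^+ k) = Ac ^+ k by rewrite rmorphXn.
rewrite AcX !mxE summxE => /(congr1 (@complex.Re R)) /= ->.
rewrite mul_mx_diag (big_morph _ ReD (erefl _)); apply: eq_bigr => l _.
have dE : d 0 l = ((complex.Re (d 0 l))%:C)%C.
  by rewrite RRe_real //; apply: (mxOverP d_real).
by rewrite !mxE [in LHS]dE -rmorphXn mulrAC ReMr mulrC.
Qed.

Lemma mxexp_spectral (R : realType) (n : nat) (A : 'M[R]_n) lam W :
  spectral_decomp A lam W -> mxexp A = \sum_l expR (lam l) *: W l.
Proof.
move=> decA; apply: cvg_lim => //.
have -> : (fun N : nat => \sum_(k < N) (k`!%:R)^-1 *: A ^+ k) =
          (fun N => \sum_l series (exp_coeff (lam l)) N *: W l).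
  apply/funext => N; under eq_bigr do rewrite decA scaler_sumr.
  rewrite exchange_big /=; apply: eq_bigr => l _.
  rewrite /series /= big_mkord scaler_suml; apply: eq_bigr => k _.
  by rewrite scalerA /exp_coeff /= mulrC.
apply: cvg_big => [|l _]; first exact: add_continuous.
exact: cvgZr_tmp (is_cvg_series_exp_coeff _).
Qed.

Lemma cvg_mxexp_semigroup (R : realType) (n : nat) (A : 'M[R]_n) lam W :
  (forall l, 0 <= lam l) -> spectral_decomp A lam W ->
  mxexp (- t *: A) @[t --> +oo] --> \sum_l (lam l == 0)%:R *: W l.
Proof.
move=> lam_ge0 decA.
have -> : (fun t => mxexp (- t *: A)) = (fun t => \sum_l expR (- t * lam l) *: W l).
  by apply/funext => t; rewrite (mxexp_spectral (spectral_decompZ decA _)).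
apply: cvg_big => [|l _]; first exact: add_continuous.
apply: cvgZr_tmp; have [->|lam_neq0] := eqVneq (lam l) 0.
  under eq_fun do rewrite mulr0 expR0.
  exact: cvg_cst.
have lam_gt0 : 0 < lam l by rewrite lt_def lam_neq0 lam_ge0.
under eq_fun do rewrite mulNr.
apply: (cvg_comp (fun t => t * lam l) (fun s => expR (- s)) _ (@cvgr_expR R)).
exact: gt0_cvgMly lam_gt0 cvg_id.
Qed.

Lemma near_mx_entries_gt0 (R : realType) (T : Type) (F : set_system T) {FF : Filter F}
    (m n : nat) (f : T -> 'M[R]_(m, n)) (K : 'M[R]_(m, n)) :
  f @ F --> K -> (forall i j, 0 < K i j) ->
  \forall x \near F, forall i j, 0 < f x i j.
Proof.
move=> fK K_gt0; apply: filter_forall => i; apply: filter_forall => j.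
apply: (@cvgr_gt R T F _ (fun x => f x i j) (K i j) _ 0 (K_gt0 i j)).
apply: (cvg_comp f (fun M : 'M[R]_(m, n) => M i j) fK).
exact: coord_continuous.
Qed.

Lemma mulmx_gt0_nneg (R : numDomainType) (m n : nat) (E : 'M[R]_(m, n)) (f : 'cV[R]_n) :
  (forall i j, 0 < E i j) -> (forall j, 0 <= f j 0) -> f != 0 ->
  forall i, 0 < (E *m f) i 0.
Proof.
move=> E_gt0 f_ge0 f_neq0 i.
have [j fj_neq0] : exists j, f j 0 != 0.
  apply/existsP; apply: contraNT f_neq0 => /existsPn f0.
  by apply/eqP/matrixP => j k; rewrite ord1 mxE; apply/eqP/negPn/f0.
have fj_gt0 : 0 < f j 0 by rewrite lt_def fj_neq0 f_ge0.
rewrite mxE (bigD1 j) //= ltr_pwDl ?mulr_gt0 //.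
by apply: sumr_ge0 => k _; exact: mulr_ge0 (ltW (E_gt0 i k)) (f_ge0 k).
Qed.

Lemma trmx_mul_self_eq0 (R : realDomainType) (p : nat) (y : 'cV[R]_p) :
  y^T *m y = 0 -> y = 0.
Proof.
move=> /matrixP/(_ 0 0); rewrite !mxE => sum_sq0.
have {}sum_sq0 : \sum_i y i 0 ^+ 2 = 0.
  by rewrite -[RHS]sum_sq0; apply: eq_bigr => i _; rewrite mxE expr2.
apply/matrixP => i j; rewrite ord1 mxE.
by apply/eqP; rewrite -sqrf_eq0 (psumr_eq0P (fun i _ => sqr_ge0 (y i 0)) sum_sq0).
Qed.

Lemma mulmx_trmx_eq0 (R : realDomainType) (p q : nat) (A : 'M[R]_(p, q)) (x : 'cV[R]_p) :
  A *m A^T *m x = 0 -> A^T *m x = 0.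
Proof.
move=> AATx; apply: trmx_mul_self_eq0.
by rewrite trmx_mul trmxK -mulmxA (mulmxA A) AATx mulmx0.
Qed.

Section Incidence.

Variables (R : comNzRingType) (n m : nat) (src tgt : 'I_m -> 'I_n).
Hypothesis loopfree : forall e, src e != tgt e.

Local Notation I := (incidence R src tgt).
Local Notation L := (laplacian R src tgt).

Lemma trmx_incidence_mul (x : 'cV[R]_n) e :
  (I^T *m x) e 0 = x (tgt e) 0 - x (src e) 0.
Proof.
have tgt_neq_src : tgt e != src e by rewrite eq_sym.
rewrite mxE (bigD1 (src e)) //= (bigD1 (tgt e)) //= big1 => [|v /andP[vs vt]].
  by rewrite !mxE eqxx (negbTE tgt_neq_src) eqxx addr0 mulN1r mul1r addrC.
by rewrite !mxE (negbTE vs) (negbTE vt) mul0r.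
Qed.

Lemma laplacian_sym : L^T = L.
Proof. by rewrite /laplacian trmx_mul trmxK. Qed.

Lemma laplacian_mul_const : L *m (const_mx 1 : 'cV[R]_n) = 0.
Proof.
suff I1 : I^T *m (const_mx 1 : 'cV[R]_n) = 0 by rewrite /laplacian -mulmxA I1 mulmx0.
by apply/matrixP => e k; rewrite ord1 trmx_incidence_mul !mxE subrr.
Qed.

End Incidence.

Lemma laplacian_sqr_kernel (R : realDomainType) (n m : nat) (src tgt : 'I_m -> 'I_n)
    (x : 'cV[R]_n) :
  (forall e, src e != tgt e) -> connected_graph src tgt ->
  laplacian R src tgt *m laplacian R src tgt *m x = 0 -> forall a b, x a 0 = x b 0.
Proof.
move=> loopfree conn LLx.
have Lx : laplacian R src tgt *m x = 0.
  by rewrite -laplacian_sym; apply: mulmx_trmx_eq0; rewrite laplacian_sym.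
have Ix : (incidence R src tgt)^T *m x = 0 by apply: mulmx_trmx_eq0; exact: Lx.
have x_adj u v : Defs.adjacent src tgt u v -> x u 0 = x v 0.
  have x_edge e : x (tgt e) 0 = x (src e) 0.
    by apply/eqP; rewrite -subr_eq0 -(trmx_incidence_mul loopfree) Ix mxE.
  by case/existsP => e /orP[] /andP[/eqP <- /eqP <-].
move=> a b; have /connectP[p a_p ->] := conn a b.
by elim: p a a_p => [|c p IHp] a //= /andP[/x_adj -> /IHp].
Qed.

Lemma laplacian_sqr_projector (R : realFieldType) (n m : nat) (src tgt : 'I_m -> 'I_n.+1)
    lam W :
  (forall e, src e != tgt e) -> connected_graph src tgt ->
  spectral_decomp (laplacian R src tgt *m laplacian R src tgt) lam W ->
  \sum_l (lam l == 0)%:R *: W l = n.+1%:R^-1 *: const_mx 1.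
Proof.
move=> loopfree conn decM.
set M := laplacian R src tgt *m laplacian R src tgt in decM *.
(* With (lam l)^-1 = 0 when lam l = 0, q is 1 at 0 and vanishes at the other eigenvalues. *)
pose q : {poly R} := \prod_l (1 - (lam l)^-1 *: 'X).
have qE x : q.[x] = \prod_l (1 - (lam l)^-1 * x).
  by rewrite horner_prod; apply: eq_bigr => l _; rewrite !hornerE.
have q_lam j : q.[lam j] = (lam j == 0)%:R.
  rewrite qE; have [->|lam_neq0] := eqVneq (lam j) 0.
    by apply: big1 => l _; rewrite mulr0 subr0.
  by rewrite (bigD1 j) //= mulVf // subrr mul0r.
have <- : horner_mx M q = \sum_l (lam l == 0)%:R *: W l.
  apply: etrans (horner_mx_spectral q decM) _.
  by apply: eq_bigr => l _; rewrite q_lam.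
set K := horner_mx M q.
have MK : M *m K = 0.
  rewrite -[M in M *m _](horner_mx_X M) mulmxE -rmorphM.
  apply: etrans (horner_mx_spectral _ decM) _; apply: big1 => l _.
  by rewrite hornerM hornerX q_lam; case: eqP => [->|_]; rewrite ?mul0r ?mulr0 scale0r.
have KM : K *m M = 0.
  by rewrite -[M in _ *m M](horner_mx_X M) mulmxE comm_horner_mx2 -mulmxE horner_mx_X MK.
have M_sym : M^T = M by rewrite trmx_mul laplacian_sym.
have K_col a a' b : K a b = K a' b.
  have := laplacian_sqr_kernel loopfree conn (x := col b K) _ a a'.
  by rewrite !mxE; apply; rewrite colE mulmxA MK mul0mx.
have K_row a b b' : K a b = K a b'.
  have := laplacian_sqr_kernel loopfree conn (x := (row a K)^T) _ b b'.
  by rewrite !mxE; apply; rewrite -/M -M_sym -trmx_mul rowE -mulmxA KM mulmx0 trmx0.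
have K1 : K *m (const_mx 1 : 'cV[R]_n.+1) = const_mx 1.
  have M1 : M *m (const_mx 1 : 'cV[R]_n.+1) = 0 by rewrite /M -mulmxA laplacian_mul_const ?mulmx0.
  apply: etrans (horner_mx_kernel q M1) _.
  by rewrite qE big1 ?scale1r // => l _; rewrite mulr0 subr0.
have K_const a b : K a b = K 0 0 by rewrite (K_col a 0) (K_row 0 b 0).
have /matrixP/(_ 0 0) := K1; rewrite !mxE.
under eq_bigr do rewrite K_const mxE mulr1.
rewrite sumr_const card_ord => nK00.
have n_neq0 : n.+1%:R != 0 :> R by rewrite pnatr_eq0.
apply/matrixP => a b; rewrite !mxE K_const mulr1.
by rewrite -[K 0 0](mulfK n_neq0) mulr_natr nK00 mul1r.
Qed.

Theorem proposition6p1 (R : realType) (n m : nat) (src tgt : 'I_m -> 'I_n) :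
  simple_graph src tgt ->
  connected_graph src tgt ->
  exists t0 : R, 0 < t0 /\
    forall t : R, t0 <= t ->
    forall f : 'cV[R]_n,
      (forall i, 0 <= f i ord0) -> f != 0 ->
      forall i, 0 < (mxexp (- t *: (laplacian R src tgt *m laplacian R src tgt)) *m f) i ord0.
Proof.
(* Multiple edges would be harmless: only loop-freeness is used. *)
case: n src tgt => [|n] src tgt [loopfree _] conn; first by exists 1; split=> // t _ f _ _ [].
have [mu [W decL]] := sym_spectral_decomp (laplacian_sym R src tgt).
have decM : spectral_decomp (laplacian R src tgt *m laplacian R src tgt) (fun l => mu l ^+ 2) W.
  by rewrite mulmxE -expr2; exact: spectral_decompX.
have heat_cvg := cvg_mxexp_semigroup (fun l => sqr_ge0 (mu l)) decM.
rewrite (laplacian_sqr_projector loopfree conn decM) in heat_cvg.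
have [T [_ heat_gt0]] : \forall t \near +oo, forall i j,
    0 < mxexp (- t *: (laplacian R src tgt *m laplacian R src tgt)) i j.
  by apply: near_mx_entries_gt0 heat_cvg _ => i j; rewrite !mxE mulr1 invr_gt0 ltr0Sn.
exists (Num.max 1 (T + 1)); split=> [|t t_ge f f_ge0 f_neq0]; first by rewrite lt_max ltr01.
apply: mulmx_gt0_nneg => // i j; apply: heat_gt0.
by apply: lt_le_trans t_ge; rewrite lt_max ltrDl ltr01 orbT.
Qed.
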